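(* Let $\mathbb{k}$ be a field of characteristic $0$ containing a primitive $n$-th root of unity $\omega$, let $H=T_{n^2}(\omega)$ be the Taft Hopf algebra and $A=A_n(\omega)=\mathbb{k}[z]/(z^n-\omega)$ with $u$ the image of $z$. Let $A$ be the left $H$-module algebra with $g\cdot u=\omega u$ and $x\cdot u=1$, and the left $H$-comodule algebra via the algebra homomorphism $\rho:A\to H\otimes A$, $\rho(u)=\sum_{i=0}^{n-1}a_i\,x^ig^{-(i+1)}\otimes u^{i+1}$ where $a_i=(\omega-1)^i\omega^{i(i+1)/2}$. Then, for every $n$, $A$ is an object of the category ${}^H_H\mathcal{YD}$ of (left, left) Yetter–Drinfeld modules, i.e. for all $h\in H$ and $m\in A$, $$\sum h_1m_{-1}\otimes h_2\cdot m_0=\sum (h_1\cdot m)_{-1}h_2\otimes (h_1\cdot m)_0,$$ where $\rho(m)=\sum m_{-1}\otimes m_0$ and $\Delta(h)=\sum h_1\otimes h_2$.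
   Context: The Taft Hopf algebra is $H=T_{n^2}(\omega)=\mathbb{k}\langle x,g\mid x^n=0,\ g^n=1,\ xg=\omega gx\rangle$ with $\Delta(g)=g\otimes g$, $\Delta(x)=x\otimes 1+g\otimes x$, $\epsilon(g)=1$, $\epsilon(x)=0$, $S(g)=g^{-1}$, $S(x)=-g^{-1}x$. ''Module algebra'' means $h\cdot(ab)=\sum(h_1\cdot a)(h_2\cdot b)$ and $h\cdot 1=\epsilon(h)1$; so the action is determined by $g\cdot u=\omega u$, $x\cdot u=1$ (e.g. $x\cdot u^{i+1}=(\sum_{j=0}^i\omega^j)u^i$). $A$ is an $H$-comodule algebra via $\rho$, meaning $(\mathrm{id}\otimes\rho)\rho=(\Delta\otimes\mathrm{id})\rho$. *)

From HB Require Import structures.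
From mathcomp Require Import all_boot all_order all_algebra.
Set Implicit Arguments. Unset Strict Implicit. Unset Printing Implicit Defensive.
Import Order.TTheory GRing.Theory Num.Theory.
Local Open Scope ring_scope.

(* Concrete coordinate model of the Taft algebra H = T_{n^2}(w), of
   A = A_n(w) = k[z]/(z^n - w), and of the tensor products H(x)H, H(x)A.
   - An element of H is its coefficient vector on the basis g^a x^b
     (a, b < n), i.e. a {ffun 'I_n * 'I_n -> k}.
   - An element of A is its coefficient vector on the basis u^c (c < n).
   - An element of V (x) W (V, W with bases I, J) is a {ffun I * J -> k}. *)

Section Taft.
Variables (k : fieldType) (n : nat) (w : k).

Definition IH := ('I_n * 'I_n)%type.   (* (a,b) <-> g^a x^b *)
Definition H := {ffun IH -> k}.
Definition A := {ffun 'I_n -> k}.       (* c <-> u^c *)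

Definition sc (I : finType) (c : k) (v : {ffun I -> k}) : {ffun I -> k} :=
  [ffun i => c * v i].

Definition mulB (I : finType) (bp : I -> I -> {ffun I -> k})
  (p q : {ffun I -> k}) : {ffun I -> k} :=
  \sum_(i : I) \sum_(j : I) sc (p i * q j) (bp i j).

Definition tens (I J : finType) (v : {ffun I -> k}) (u : {ffun J -> k})
  : {ffun (I * J)%type -> k} := [ffun ij => v ij.1 * u ij.2].

Definition bpT (I J : finType) (bpI : I -> I -> {ffun I -> k})
  (bpJ : J -> J -> {ffun J -> k}) (i j : (I * J)%type) :=
  tens (bpI i.1 j.1) (bpJ i.2 j.2).

Definition powB (I : finType) (mul : {ffun I -> k} -> {ffun I -> k} -> {ffun I -> k})
  (one v : {ffun I -> k}) (m : nat) := iter m (mul v) one.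

(* basis vector g^a x^b of H (a taken mod n since g^n = 1; it is 0 when
   b >= n since x^n = 0) *)
Definition EH (a b : nat) : H :=
  [ffun ab : IH => ((ab.1 == (a %% n)%N :> nat) && (ab.2 == b :> nat))%:R].
Definition EHi (i : IH) : H := EH i.1 i.2.

(* x^b g^c = w^(b c) g^c x^b *)
Definition bpH (i j : IH) : H := sc (w ^+ (i.2 * j.1)) (EH (i.1 + j.1) (i.2 + j.2)).
Definition mulH := mulB bpH.
Definition oneH := EH 0 0.
Definition powH := powB mulH oneH.
Definition gH := EH 1 0.
Definition xH := EH 0 1.
Definition ginvH := EH (n - 1) 0.  (* g^{-1} = g^{n-1} *)

Definition EA (c : nat) : A := [ffun i : 'I_n => (i == c :> nat)%:R].
(* u^i u^j = u^(i+j), with u^n = w *)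
Definition bpA (i j : 'I_n) : A :=
  if (i + j < n)%N then EA (i + j) else sc w (EA (i + j - n)).
Definition mulA := mulB bpA.
Definition oneA := EA 0.
Definition powA := powB mulA oneA.
Definition uA := EA 1.

Definition mulHH := mulB (bpT bpH bpH).
Definition oneHH := tens oneH oneH.
Definition powHH := powB mulHH oneHH.
Definition mulHA := mulB (bpT bpH bpA).
Definition oneHA := tens oneH oneA.
Definition powHA := powB mulHA oneHA.

(* coproduct: the algebra map with Delta g = g(x)g, Delta x = x(x)1 + g(x)x *)
Definition DeltaB (i : IH) : {ffun (IH * IH)%type -> k} :=
  mulHH (powHH (tens gH gH) i.1) (powHH (tens xH oneH + tens gH xH) i.2).
Definition Delta (h : H) : {ffun (IH * IH)%type -> k} :=
  \sum_(i : IH) sc (h i) (DeltaB i).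

(* module-algebra action: g.u^c = w^c u^c, x.u^(i+1) = (sum_(j<=i) w^j) u^i,
   x.1 = 0; and g^a x^b . m = g^a.(x^b.m) *)
Definition actG (m : A) : A := \sum_(c : 'I_n) sc (m c) (sc (w ^+ c) (EA c)).
Definition actXB (c : nat) : A :=
  if c is i.+1 then sc (\sum_(j < i.+1) w ^+ j) (EA i) else 0.
Definition actX (m : A) : A := \sum_(c : 'I_n) sc (m c) (actXB c).
Definition act (h : H) (m : A) : A :=
  \sum_(i : IH) \sum_(c : 'I_n) sc (h i * m c) (iter i.1 actG (iter i.2 actX (EA c))).

(* comodule-algebra coaction: rho(u) = sum_i a_i x^i g^{-(i+1)} (x) u^(i+1),
   a_i = (w-1)^i w^(i(i+1)/2), extended as an algebra map *)
Definition coef_a (i : nat) : k := (w - 1) ^+ i * w ^+ (i * i.+1)./2.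
Definition rhou : {ffun (IH * 'I_n)%type -> k} :=
  \sum_(i < n) sc (coef_a i) (tens (mulH (powH xH i) (powH ginvH i.+1)) (powA uA i.+1)).
Definition rho (m : A) : {ffun (IH * 'I_n)%type -> k} :=
  \sum_(c : 'I_n) sc (m c) (powHA rhou c).

Definition YD_lhs (h : H) (m : A) : {ffun (IH * 'I_n)%type -> k} :=
  \sum_(pq : IH * IH) \sum_(rc : IH * 'I_n)
     sc (Delta h pq * rho m rc) (tens (mulH (EHi pq.1) (EHi rc.1)) (act (EHi pq.2) (EA rc.2))).
Definition YD_rhs (h : H) (m : A) : {ffun (IH * 'I_n)%type -> k} :=
  \sum_(pq : IH * IH) sc (Delta h pq)
     (\sum_(rc : IH * 'I_n)
        sc (rho (act (EHi pq.1) m) rc) (tens (mulH (EHi rc.1) (EHi pq.2)) (EA rc.2))).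

End Taft.

From Pilot Require Import Defs.
From mathcomp Require Import all_boot all_order all_algebra.
From mathcomp Require Import ring zify.
Set Implicit Arguments. Unset Strict Implicit. Unset Printing Implicit Defensive.
Import GRing.Theory.
Local Open Scope ring_scope.

(* Both sides of the Yetter-Drinfeld condition are linear in h, and
   Delta(g^a x^b) = (Delta g)^a (Delta x)^b.  For T in H (x) H, the identity
   "T acting on rho m (left factor by multiplication, right factor by the
   action) equals rho(T1 . m) T2" is stable under products, so it is enough to
   check it for Delta g = g (x) g and Delta x = x (x) 1 + g (x) x, and, by
   linearity in m, for m = u^c.  As rho is multiplicative, rho(u^c) = rho(u)^c,
   and since g . u^c = w^c u^c and x . u^c = [c]_w u^(c-1), an induction on c
   reduces both checks to two identities for rho(u):
     (g (x) 1)(g . rho u) = w rho(u)(g (x) 1),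
     (x (x) 1) rho u + (g (x) 1)(x . rho u) = 1 (x) 1 + w rho(u)(x (x) 1).
   The first is a direct computation; in the second the sum telescopes thanks
   to a two-term recursion satisfied by the coefficients a_i. *)

(** * Coordinate vectors and linear maps *)

Section CoordinateVectors.
Variable k : fieldType.
Implicit Types (I J L : finType) (a b c : k).

Definition deltaf I (i : I) : {ffun I -> k} := [ffun j => (j == i)%:R].

Lemma deltafE I (i j : I) : deltaf i j = (j == i)%:R.
Proof. by rewrite ffunE. Qed.

Lemma scE I c (v : {ffun I -> k}) i : sc c v i = c * v i.
Proof. by rewrite ffunE. Qed.

Lemma scA I a b (v : {ffun I -> k}) : sc a (sc b v) = sc (a * b) v.
Proof. by apply/ffunP=> i; rewrite !ffunE mulrA. Qed.

Lemma sc1v I (v : {ffun I -> k}) : sc 1 v = v.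
Proof. by apply/ffunP=> i; rewrite !ffunE mul1r. Qed.

Lemma sc0v I (v : {ffun I -> k}) : sc 0 v = 0.
Proof. by apply/ffunP=> i; rewrite !ffunE mul0r. Qed.

Lemma scv0 I c : sc c (0 : {ffun I -> k}) = 0.
Proof. by apply/ffunP=> i; rewrite !ffunE mulr0. Qed.

Lemma scDv I a b (v : {ffun I -> k}) : sc (a + b) v = sc a v + sc b v.
Proof. by apply/ffunP=> i; rewrite !ffunE mulrDl. Qed.

Lemma scvD I c (u v : {ffun I -> k}) : sc c (u + v) = sc c u + sc c v.
Proof. by apply/ffunP=> i; rewrite !ffunE mulrDr. Qed.

Lemma scBv I a b (v : {ffun I -> k}) : sc (a - b) v = sc a v - sc b v.
Proof. by apply/ffunP=> i; rewrite !ffunE mulrBl. Qed.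

Lemma scvB I c (u v : {ffun I -> k}) : sc c (u - v) = sc c u - sc c v.
Proof. by apply/ffunP=> i; rewrite !ffunE mulrBr. Qed.

Lemma scN1v I (v : {ffun I -> k}) : sc (-1) v = - v.
Proof. by apply/ffunP=> x; rewrite !ffunE mulN1r. Qed.

Lemma scv_sum I J (P : pred J) c (F : J -> {ffun I -> k}) :
  sc c (\sum_(j | P j) F j) = \sum_(j | P j) sc c (F j).
Proof.
by apply/ffunP=> x; rewrite ffunE !sum_ffunE mulr_sumr; apply: eq_bigr => j _; rewrite ffunE.
Qed.

Lemma sum_sc_deltaf I J (F : I -> {ffun J -> k}) (i : I) :
  \sum_j sc (deltaf i j) (F j) = F i.
Proof.
rewrite (bigD1 i) //= big1 ?addr0 => [|j /negbTE ji]; first by rewrite deltafE eqxx sc1v.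
by rewrite deltafE ji sc0v.
Qed.

Lemma ffun_deltaf_decomp I (v : {ffun I -> k}) : v = \sum_i sc (v i) (deltaf i).
Proof.
apply/ffunP=> x; rewrite sum_ffunE (bigD1 x) //= big1 ?addr0 => [|i /negbTE xi].
  by rewrite scE deltafE eqxx mulr1.
by rewrite scE deltafE eq_sym xi mulr0.
Qed.

(** Linearity is stated for [sc] since [{ffun I -> k}] carries no canonical
    [k]-module structure. *)
Definition islinear I J (f : {ffun I -> k} -> {ffun J -> k}) :=
  forall c u v, f (sc c u + v) = sc c (f u) + f v.

Section Linear.
Variables (I J : finType) (f : {ffun I -> k} -> {ffun J -> k}).
Hypothesis f_lin : islinear f.

Lemma islinear0 : f 0 = 0.
Proof.
have f00 : f 0 = f 0 + f 0 by rewrite -{1}(addr0 0) -{1}(scv0 _ 1) f_lin sc1v.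
by apply: (addrI (f 0)); rewrite addr0 -f00.
Qed.

Lemma islinearD u v : f (u + v) = f u + f v.
Proof. by rewrite -{1}(sc1v u) f_lin sc1v. Qed.

Lemma islinearZ c v : f (sc c v) = sc c (f v).
Proof. by rewrite -[sc c v]addr0 f_lin islinear0 addr0. Qed.

Lemma islinearB u v : f (u - v) = f u - f v.
Proof. by rewrite -!scN1v islinearD islinearZ. Qed.

Lemma islinear_sum L (P : pred L) (F : L -> {ffun I -> k}) :
  f (\sum_(l | P l) F l) = \sum_(l | P l) f (F l).
Proof. exact: (big_morph f islinearD islinear0). Qed.

Lemma islinear_decomp v : f v = \sum_i sc (v i) (f (deltaf i)).
Proof.
by rewrite {1}[v]ffun_deltaf_decomp islinear_sum; apply: eq_bigr => i _; rewrite islinearZ.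
Qed.

End Linear.

Lemma islinear_eq I J (f g : {ffun I -> k} -> {ffun J -> k}) :
  islinear f -> islinear g -> (forall i, f (deltaf i) = g (deltaf i)) -> f =1 g.
Proof.
move=> f_lin g_lin fg v; rewrite (islinear_decomp f_lin) (islinear_decomp g_lin).
by apply: eq_bigr => i _; rewrite fg.
Qed.

Lemma islinear2_eq I J L (f g : {ffun I -> k} -> {ffun J -> k} -> {ffun L -> k}) :
  (forall v, islinear (f^~ v)) -> (forall u, islinear (f u)) ->
  (forall v, islinear (g^~ v)) -> (forall u, islinear (g u)) ->
  (forall i j, f (deltaf i) (deltaf j) = g (deltaf i) (deltaf j)) ->
  forall u v, f u v = g u v.
Proof.
move=> f1 f2 g1 g2 fg u v; apply: (islinear_eq (f1 v) (g1 v) _ u) => i.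
exact: (islinear_eq (f2 _) (g2 _)).
Qed.

Lemma islinear_id I : islinear (@id {ffun I -> k}).
Proof. by []. Qed.

Lemma islinear_comp I J L (f : {ffun I -> k} -> {ffun J -> k})
    (g : {ffun J -> k} -> {ffun L -> k}) :
  islinear f -> islinear g -> islinear (g \o f).
Proof. by move=> f_lin g_lin c u v /=; rewrite f_lin g_lin. Qed.

Lemma islinear_iter I (f : {ffun I -> k} -> {ffun I -> k}) m :
  islinear f -> islinear (iter m f).
Proof.
by move=> f_lin; elim: m => [|m IHm] //=; apply: (islinear_comp IHm f_lin).
Qed.

Lemma islinearDf I J (f g : {ffun I -> k} -> {ffun J -> k}) :
  islinear f -> islinear g -> islinear (fun v => f v + g v).
Proof.
by move=> f_lin g_lin c u v; rewrite f_lin g_lin scvD addrACA.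
Qed.

Lemma islinear_sumf I J L (F : L -> k) (f : L -> {ffun I -> k} -> {ffun J -> k}) :
  (forall l, islinear (f l)) -> islinear (fun v => \sum_l sc (F l) (f l v)).
Proof.
move=> f_lin c u v; rewrite scv_sum -big_split; apply: eq_bigr => l _.
by rewrite f_lin scvD !scA mulrC.
Qed.

Definition linext I J (f : I -> {ffun J -> k}) (v : {ffun I -> k}) :=
  \sum_i sc (v i) (f i).

Lemma linext_deltaf I J (f : I -> {ffun J -> k}) i : linext f (deltaf i) = f i.
Proof. exact: sum_sc_deltaf. Qed.

Lemma islinear_linext I J (f : I -> {ffun J -> k}) : islinear (linext f).
Proof.
move=> c u v; rewrite /linext scv_sum -big_split; apply: eq_bigr => i _.
by rewrite ffunE scDv ffunE scA.
Qed.

End CoordinateVectors.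

Arguments deltaf {k I} i.
Arguments islinear {k I J} f.
Arguments linext {k I J} f v.

(** * Algebras given by structure constants *)

Section BasisProducts.
Variables (k : fieldType) (I : finType) (bp : I -> I -> {ffun I -> k}).
Local Notation mul := (mulB bp).

Lemma mulBE p q x : mul p q x = \sum_i \sum_j p i * q j * bp i j x.
Proof.
rewrite sum_ffunE; apply: eq_bigr => i _; rewrite sum_ffunE.
by apply: eq_bigr => j _; rewrite ffunE.
Qed.

Lemma mulB_deltaf i j : mul (deltaf i) (deltaf j) = bp i j.
Proof.
apply/ffunP=> x; rewrite mulBE (bigD1 i) //= [X in _ + X]big1 ?addr0 => [|i' /negbTE i'i].
  rewrite (bigD1 j) //= [X in _ + X]big1 ?addr0 => [|j' /negbTE j'j].
    by rewrite !deltafE !eqxx !mul1r.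
  by rewrite !deltafE j'j mulr0 mul0r.
by apply: big1 => j' _; rewrite deltafE i'i !mul0r.
Qed.

Lemma islinear_mulBl q : islinear (mul^~ q).
Proof.
move=> c u v; apply/ffunP=> x; rewrite !ffunE !mulBE mulr_sumr -big_split.
apply: eq_bigr => i _; rewrite mulr_sumr -big_split.
by apply: eq_bigr => j _; rewrite /= !ffunE; ring.
Qed.

Lemma islinear_mulBr p : islinear (mul p).
Proof.
move=> c u v; apply/ffunP=> x; rewrite !ffunE !mulBE mulr_sumr -big_split.
apply: eq_bigr => i _; rewrite mulr_sumr -big_split.
by apply: eq_bigr => j _; rewrite /= !ffunE; ring.
Qed.

Lemma mulB_assoc :
  (forall i j l, mul (deltaf i) (bp j l) = mul (bp i j) (deltaf l)) ->
  associative mul.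
Proof.
move=> bp_assoc p q r; move: p q.
apply: (islinear2_eq (f := fun p q => mul p (mul q r)) (g := fun p q => mul (mul p q) r)).
- move=> q; exact: islinear_mulBl.
- move=> p; exact: islinear_comp (islinear_mulBl r) (islinear_mulBr p).
- move=> q; exact: islinear_comp (islinear_mulBl q) (islinear_mulBl r).
- move=> p; exact: islinear_comp (islinear_mulBr p) (islinear_mulBl r).
move=> i j /=; rewrite mulB_deltaf; move: r; apply: islinear_eq.
- exact: islinear_comp (islinear_mulBr _) (islinear_mulBr _).
- exact: islinear_mulBr.
by move=> l; rewrite mulB_deltaf.
Qed.

Lemma mulB_left_id o : (forall i, mul o (deltaf i) = deltaf i) -> left_id o mul.
Proof. by move=> o1; apply: islinear_eq; [exact: islinear_mulBr | exact: islinear_id |]. Qed.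

Lemma mulB_right_id o : (forall i, mul (deltaf i) o = deltaf i) -> right_id o mul.
Proof. by move=> o1; apply: islinear_eq; [exact: islinear_mulBl | exact: islinear_id |]. Qed.

End BasisProducts.

Section Tensors.
Variables (k : fieldType) (I J : finType).
Implicit Types (u : {ffun I -> k}) (v : {ffun J -> k}).

Lemma tensE u v ij : tens u v ij = u ij.1 * v ij.2.
Proof. by rewrite ffunE. Qed.

Lemma tens_deltaf (i : I) (j : J) : tens (deltaf i) (deltaf j) = deltaf (i, j) :> {ffun _ -> k}.
Proof.
apply/ffunP=> [[x y]]; rewrite !ffunE -natrM xpair_eqE.
by case: (x == i); case: (y == j).
Qed.

Lemma islinear_tensl v : islinear (fun u : {ffun I -> k} => tens u v).
Proof. by move=> c u u'; apply/ffunP=> x; rewrite !ffunE mulrDl mulrA. Qed.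

Lemma islinear_tensr u : islinear (fun v : {ffun J -> k} => tens u v).
Proof. by move=> c v v'; apply/ffunP=> x; rewrite !ffunE mulrDr mulrCA. Qed.

Lemma islinear_tens_eq (L : finType) (f g : {ffun (I * J)%type -> k} -> {ffun L -> k}) :
  islinear f -> islinear g ->
  (forall i j, f (tens (deltaf i) (deltaf j)) = g (tens (deltaf i) (deltaf j))) ->
  f =1 g.
Proof. by move=> f_lin g_lin fg; apply: islinear_eq => // [[i j]]; rewrite -tens_deltaf. Qed.

Lemma islinear2_tens_eq (L : finType)
    (f g : {ffun (I * J)%type -> k} -> {ffun (I * J)%type -> k} -> {ffun L -> k}) :
  (forall t, islinear (f^~ t)) -> (forall s, islinear (f s)) ->
  (forall t, islinear (g^~ t)) -> (forall s, islinear (g s)) ->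
  (forall i j i' j', f (tens (deltaf i) (deltaf j)) (tens (deltaf i') (deltaf j')) =
                     g (tens (deltaf i) (deltaf j)) (tens (deltaf i') (deltaf j'))) ->
  forall s t, f s t = g s t.
Proof.
by move=> f1 f2 g1 g2 fg; apply: islinear2_eq => // [[i j] [i' j']]; rewrite -!tens_deltaf.
Qed.

Variables (bI : I -> I -> {ffun I -> k}) (bJ : J -> J -> {ffun J -> k}).
Local Notation mulT := (mulB (bpT bI bJ)).

Lemma mulB_tens u u' v v' :
  mulT (tens u v) (tens u' v') = tens (mulB bI u u') (mulB bJ v v').
Proof.
apply/ffunP=> -[x y]; rewrite mulBE tensE /= !mulBE mulr_suml.
transitivity (\sum_i \sum_(i2 : J) \sum_j \sum_(j2 : J)
   u i * u' j * bI i j x * (v i2 * v' j2 * bJ i2 j2 y)); last first.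
  apply: eq_bigr => i _; rewrite mulr_suml exchange_big; apply: eq_bigr => i2 _.
  by rewrite mulr_sumr; apply: eq_bigr => j _; rewrite mulr_sumr.
rewrite [RHS]pair_bigA; apply: eq_bigr => -[i1 i2] _ /=.
rewrite pair_bigA; apply: eq_bigr => -[j1 j2] _ /=.
by rewrite !tensE; ring.
Qed.

Lemma bpT_assoc : associative (mulB bI) -> associative (mulB bJ) -> associative mulT.
Proof.
move=> assocI assocJ; apply: mulB_assoc => -[i1 i2] [j1 j2] [l1 l2].
rewrite /bpT /= -!tens_deltaf !mulB_tens.
rewrite -(mulB_deltaf bI i1) -(mulB_deltaf bI j1) -(mulB_deltaf bJ i2) -(mulB_deltaf bJ j2).
by rewrite assocI assocJ.
Qed.

Lemma bpT_left_id oI oJ :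
  left_id oI (mulB bI) -> left_id oJ (mulB bJ) -> left_id (tens oI oJ) mulT.
Proof.
by move=> oI1 oJ1; apply: mulB_left_id => -[i j]; rewrite -tens_deltaf mulB_tens oI1 oJ1.
Qed.

Lemma bpT_right_id oI oJ :
  right_id oI (mulB bI) -> right_id oJ (mulB bJ) -> right_id (tens oI oJ) mulT.
Proof.
by move=> oI1 oJ1; apply: mulB_right_id => -[i j]; rewrite -tens_deltaf mulB_tens oI1 oJ1.
Qed.

End Tensors.

(** * The Taft algebra and the module algebra A *)

Section Taft.
Variables (k : fieldType) (n : nat) (w : k).
Hypothesis n_gt1 : (1 < n)%N.
Hypothesis w_n : w ^+ n = 1.
Hypothesis sum_w_n : \sum_(j < n) w ^+ j = 0.

Let n_gt0 : (0 < n)%N := ltnW n_gt1.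

Local Notation HA := {ffun (IH n * 'I_n) -> k}.
Local Notation HH := {ffun (IH n * IH n) -> k}.
Local Notation EH := (EH k n).
Local Notation EA := (EA k n).
Local Notation mH := (@Defs.mulH k n w).
Local Notation mA := (@Defs.mulA k n w).
Local Notation mHA := (@Defs.mulHA k n w).
Local Notation mHH := (@Defs.mulHH k n w).
Local Notation oH := (oneH k n).
Local Notation oA := (oneA k n).
Local Notation aG := (@actG k n w).
Local Notation aX := (@actX k n w).
Local Notation act := (@Defs.act k n w).
Local Notation rho := (@Defs.rho k n w).
Local Notation g := (gH k n).
Local Notation x := (xH k n).

Lemma EH_ge a b : (n <= b)%N -> EH a b = 0.
Proof.
move=> nb; apply/ffunP=> -[i j]; rewrite !ffunE /=.
have /negbTE -> : (j : nat) != b by rewrite neq_ltn (leq_trans (ltn_ord j) nb).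
by rewrite andbF.
Qed.

Lemma EH_congr_mod a a' b : a = a' %[mod n] -> EH a b = EH a' b.
Proof. by move=> aa'; apply/ffunP=> i; rewrite !ffunE aa'. Qed.

Lemma EHi_deltaf (i : IH n) : EHi k i = deltaf i.
Proof.
case: i => -[a a_lt] [b b_lt]; apply/ffunP=> -[[i i_lt] [j j_lt]].
by rewrite !ffunE /= modn_small.
Qed.

Lemma EH_deltaf a b (a_lt : (a < n)%N) (b_lt : (b < n)%N) :
  EH a b = deltaf ((Ordinal a_lt, Ordinal b_lt) : IH n).
Proof. by rewrite -EHi_deltaf. Qed.

Lemma mulH_EH a b c d : mH (EH a b) (EH c d) = sc (w ^+ (b * c)) (EH (a + c) (b + d)).
Proof.
rewrite /mulH; have [b_lt | b_ge] := ltnP b n; last first.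
  by rewrite EH_ge // (islinear0 (islinear_mulBl _ _)) EH_ge ?scv0 // (leq_trans b_ge) ?leq_addr.
have [d_lt | d_ge] := ltnP d n; last first.
  rewrite (EH_ge c d_ge) (islinear0 (islinear_mulBr _ _)) EH_ge ?scv0 //.
  by rewrite (leq_trans d_ge) ?leq_addl.
rewrite (EH_congr_mod b (esym (modn_mod a n))) (EH_congr_mod d (esym (modn_mod c n))).
rewrite (EH_deltaf (ltn_pmod a n_gt0) b_lt) (EH_deltaf (ltn_pmod c n_gt0) d_lt).
rewrite mulB_deltaf /bpH /= -(expr_mod _ w_n) modnMmr (expr_mod _ w_n).
by congr sc; apply: EH_congr_mod; rewrite modnDm.
Qed.

Lemma mulH_assoc : associative mH.
Proof.
apply: mulB_assoc => i j l; rewrite /bpH -!EHi_deltaf.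
rewrite (islinearZ (islinear_mulBl _ _)) (islinearZ (islinear_mulBr _ _)).
rewrite -/mH !mulH_EH !scA -!exprD !addnA; congr (sc (w ^+ _) _); ring.
Qed.

Lemma mul1H : left_id oH mH.
Proof.
apply: mulB_left_id => i; change (mH (EH 0 0) (deltaf i) = deltaf i).
by rewrite -EHi_deltaf mulH_EH mul0n sc1v.
Qed.

Lemma mulH1 : right_id oH mH.
Proof.
apply: mulB_right_id => i; change (mH (deltaf i) (EH 0 0) = deltaf i).
by rewrite -EHi_deltaf mulH_EH muln0 !addn0 sc1v.
Qed.

(** [upow s] is [u^s] for every [s], reduced with [u^n = w]. *)
Definition upow (s : nat) : A k n := sc (w ^+ (s %/ n)) (EA (s %% n)).

Lemma EA_deltaf (i : 'I_n) : EA i = deltaf i.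
Proof. by apply/ffunP=> j; rewrite !ffunE. Qed.

Lemma upow_small c : (c < n)%N -> upow c = EA c.
Proof. by move=> c_lt; rewrite /upow divn_small // modn_small // sc1v. Qed.

Lemma upowDMn s q : upow (s + q * n)%N = sc (w ^+ q) (upow s).
Proof. by rewrite /upow scA -exprD addnC divnMDl // modnMDl. Qed.

Lemma upow_deltaf s : upow s = sc (w ^+ (s %/ n)) (deltaf (Ordinal (ltn_pmod s n_gt0))).
Proof. by rewrite /upow -EA_deltaf. Qed.

Lemma bpA_upow (i j : 'I_n) : bpA w i j = upow (i + j)%N.
Proof.
rewrite /bpA; case: ifP => [ij_lt | /negbT]; first by rewrite upow_small.
rewrite -leqNgt => ij_ge.
have ij_eq : (i + j = (i + j - n) + 1 * n)%N by lia.
by rewrite [in RHS]ij_eq upowDMn expr1 upow_small //; move: (ltn_ord i) (ltn_ord j); lia.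
Qed.

Lemma mulA_upow s t : mA (upow s) (upow t) = upow (s + t)%N.
Proof.
rewrite (upow_deltaf s) (upow_deltaf t) /Defs.mulA.
rewrite (islinearZ (islinear_mulBl _ _)) (islinearZ (islinear_mulBr _ _)).
rewrite mulB_deltaf bpA_upow /= scA.
have -> : (s + t = (s %% n + t %% n) + (s %/ n + t %/ n) * n)%N.
  by rewrite {1}(divn_eq s n) {1}(divn_eq t n) mulnDl; lia.
by rewrite upowDMn -exprD addnC.
Qed.

Lemma mulA_assoc : associative mA.
Proof.
apply: mulB_assoc => i j l.
by rewrite !bpA_upow -!EA_deltaf -!upow_small // -/mA !mulA_upow addnA.
Qed.

Lemma oneA_upow : oA = upow 0.
Proof. by rewrite upow_small. Qed.

Lemma mul1A : left_id oA mA.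
Proof.
apply: mulB_left_id => i; change (mA oA (deltaf i) = deltaf i).
by rewrite -EA_deltaf -upow_small // oneA_upow mulA_upow.
Qed.

Lemma mulA1 : right_id oA mA.
Proof.
apply: mulB_right_id => i; change (mA (deltaf i) oA = deltaf i).
by rewrite -EA_deltaf -upow_small // oneA_upow mulA_upow addn0.
Qed.

Lemma islinear_mulHl h : islinear (mH^~ h).
Proof. exact: islinear_mulBl. Qed.

Lemma islinear_mulHr h : islinear (mH h).
Proof. exact: islinear_mulBr. Qed.

Lemma islinear_mulAl a : islinear (mA^~ a).
Proof. exact: islinear_mulBl. Qed.

Lemma islinear_mulAr a : islinear (mA a).
Proof. exact: islinear_mulBr. Qed.

Lemma islinear_mulHAl t : islinear (mHA^~ t).
Proof. exact: islinear_mulBl. Qed.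

Lemma islinear_mulHAr t : islinear (@mulHA k n w t).
Proof. exact: islinear_mulBr. Qed.

Lemma mulHA_tens a b c d : mHA (tens a b) (tens c d) = tens (mH a c) (mA b d).
Proof. exact: mulB_tens. Qed.

Lemma mulHH_tens a b c d : mHH (tens a b) (tens c d) = tens (mH a c) (mH b d).
Proof. exact: mulB_tens. Qed.

Lemma mulHA_assoc : associative mHA.
Proof. exact: bpT_assoc mulH_assoc mulA_assoc. Qed.

Lemma mul1HA : left_id (oneHA k n) mHA.
Proof. exact: bpT_left_id mul1H mul1A. Qed.

Lemma mulHA1 : right_id (oneHA k n) mHA.
Proof. exact: bpT_right_id mulH1 mulA1. Qed.

Definition qint (s : nat) : k := \sum_(j < s) w ^+ j.

Lemma qint0 : qint 0 = 0.
Proof. by rewrite /qint big_ord0. Qed.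

Lemma qintD a b : qint (a + b)%N = qint a + w ^+ a * qint b.
Proof.
rewrite /qint big_split_ord /= mulr_sumr; congr (_ + _).
by apply: eq_bigr => j _; rewrite exprD.
Qed.

Lemma qintS a : qint a.+1 = 1 + w * qint a.
Proof. by rewrite -add1n qintD /qint big_ord1 expr1. Qed.

Lemma qintDMn a q : qint (a + q * n)%N = qint a.
Proof.
elim: q => [|q IHq]; first by rewrite addn0.
by rewrite mulSn addnCA qintD [qint n]sum_w_n w_n mul1r add0r IHq.
Qed.

Lemma qint_mod a : qint (a %% n) = qint a.
Proof. by rewrite {2}(divn_eq a n) addnC qintDMn. Qed.

Lemma islinear_actG : islinear aG.
Proof. exact: (islinear_linext (fun c : 'I_n => sc (w ^+ c) (EA c))). Qed.

Lemma islinear_actX : islinear aX.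
Proof. exact: (islinear_linext (fun c : 'I_n => actXB n w c)). Qed.

Lemma actG_upow s : aG (upow s) = sc (w ^+ s) (upow s).
Proof.
rewrite upow_deltaf (islinearZ islinear_actG).
by rewrite [aG _](linext_deltaf (fun c : 'I_n => sc (w ^+ c) (EA c))) /= expr_mod // !scA mulrC.
Qed.

Lemma actX_upow s : aX (upow s) = sc (qint s) (upow s.-1).
Proof.
rewrite upow_deltaf (islinearZ islinear_actX).
rewrite [aX _](linext_deltaf (fun c : 'I_n => actXB n w c)) /= -qint_mod.
have s_eq : s = (s %% n + s %/ n * n)%N by rewrite addnC -divn_eq.
move: (ltn_pmod s n_gt0) s_eq; case: (s %% n)%N => [|r] r_lt s_eq /=.
  by rewrite qint0 sc0v scv0.
have -> : (s.-1 = r + s %/ n * n)%N by rewrite {1}s_eq.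
by rewrite upowDMn upow_small 1?ltnW // !scA mulrC.
Qed.

Lemma actX_oneA : aX (oneA k n) = 0.
Proof. by rewrite oneA_upow actX_upow qint0 sc0v. Qed.

Lemma actG_oneA : aG (oneA k n) = oneA k n.
Proof. by rewrite oneA_upow actG_upow sc1v. Qed.

Lemma iter_actG_n m : iter n aG m = m.
Proof.
move: m; apply: islinear_eq (islinear_iter n islinear_actG) (@islinear_id _ _) _ => c.
have iter_upow j : iter j aG (upow c) = sc (w ^+ (j * c)) (upow c).
  elim: j => [|j IHj]; first by rewrite mul0n sc1v.
  by rewrite iterS IHj (islinearZ islinear_actG) actG_upow scA -exprD mulSnr.
by rewrite -EA_deltaf -upow_small // iter_upow exprM w_n expr1n sc1v.
Qed.

Lemma iter_actG_mod a m : iter (a %% n) aG m = iter a aG m.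
Proof.
have iter_nq q : iter (q * n) aG m = m.
  by elim: q => [|q IHq] //; rewrite mulSn iterD IHq iter_actG_n.
by rewrite [in RHS](divn_eq a n) addnC iterD iter_nq.
Qed.

Lemma iter_actX_EA b c : (c < n)%N -> (c < b)%N -> iter b aX (EA c) = 0.
Proof.
elim: b c => [|b IHb] [|c] c_lt cb //=; rewrite -iterS iterSr -upow_small // actX_upow.
  by rewrite qint0 sc0v (islinear0 (islinear_iter b islinear_actX)).
by rewrite (islinearZ (islinear_iter b islinear_actX)) upow_small 1?ltnW // IHb ?scv0 // ltnW.
Qed.

Lemma iter_actX_ge b m : (n <= b)%N -> iter b aX m = 0.
Proof.
move=> nb; rewrite (islinear_decomp (islinear_iter b islinear_actX)) big1 // => c _.
by rewrite -EA_deltaf iter_actX_EA ?scv0 // (leq_trans (ltn_ord c)).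
Qed.

Lemma actX_actG m : aX (aG m) = sc w (aG (aX m)).
Proof.
move: m; apply: islinear_eq.
- exact: islinear_comp islinear_actG islinear_actX.
- by move=> c u v; rewrite islinear_actX islinear_actG scvD !scA mulrC.
move=> c; rewrite -EA_deltaf -upow_small // actG_upow (islinearZ islinear_actX) actX_upow.
rewrite (islinearZ islinear_actG) actG_upow !scA.
case: (nat_of_ord c) => [|c'] /=; first by rewrite qint0 !mulr0 !mul0r !sc0v.
by rewrite exprS; congr sc; ring.
Qed.

Lemma iter_actX_actG a b m :
  iter b aX (iter a aG m) = sc (w ^+ (a * b)) (iter a aG (iter b aX m)).
Proof.
have actX_iterG a' m' : aX (iter a' aG m') = sc (w ^+ a') (iter a' aG (aX m')).
  elim: a' m' => [|a' IHa] m' /=; first by rewrite sc1v.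
  by rewrite actX_actG IHa (islinearZ islinear_actG) scA exprS.
elim: b m => [|b IHb] m /=; first by rewrite muln0 sc1v.
rewrite -iterS iterSr actX_iterG (islinearZ (islinear_iter b islinear_actX)) IHb.
by rewrite scA -exprD mulnS -iterSr iterS.
Qed.

Lemma islinear_actl m : islinear (act^~ m).
Proof.
move=> c u v; rewrite /Defs.act scv_sum -big_split; apply: eq_bigr => i _.
rewrite scv_sum -big_split; apply: eq_bigr => j _ /=.
by rewrite !ffunE scA -scDv mulrDl mulrA.
Qed.

Lemma islinear_iterGX a b : islinear (fun m => iter a aG (iter b aX m)).
Proof. exact: islinear_comp (islinear_iter b islinear_actX) (islinear_iter a islinear_actG). Qed.

Lemma act_deltaf (i : IH n) m : act (deltaf i) m = iter i.1 aG (iter i.2 aX m).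
Proof.
rewrite (islinear_decomp (islinear_iterGX i.1 i.2) m) /Defs.act (bigD1 i) //=.
rewrite [X in _ + X]big1 ?addr0 => [|j /negbTE ji].
  by apply: eq_bigr => c _; rewrite deltafE eqxx mul1r EA_deltaf.
by apply: big1 => c _; rewrite deltafE ji mul0r sc0v.
Qed.

Lemma act_EH a b m : act (EH a b) m = iter a aG (iter b aX m).
Proof.
have [b_lt | b_ge] := ltnP b n.
  by rewrite (EH_congr_mod b (esym (modn_mod a n))) (EH_deltaf (ltn_pmod a n_gt0) b_lt)
    act_deltaf /= iter_actG_mod.
rewrite EH_ge // (islinear0 (islinear_actl m)) iter_actX_ge //.
by rewrite (islinear0 (islinear_iter a islinear_actG)).
Qed.

Lemma islinear_actr h : islinear (act h).
Proof.
move=> c u v; rewrite !(islinear_decomp (islinear_actl _) h) scv_sum -big_split.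
by apply: eq_bigr => i _; rewrite !act_deltaf islinear_iterGX scvD !scA mulrC.
Qed.

Lemma act1 m : act (oneH k n) m = m.
Proof. by rewrite act_EH. Qed.

Lemma act_g m : act g m = aG m.
Proof. by rewrite act_EH. Qed.

Lemma act_x m : act x m = aX m.
Proof. by rewrite act_EH. Qed.

Lemma act_mul h h' m : act (mH h h') m = act h (act h' m).
Proof.
move: h h'; apply: (islinear2_eq (f := fun h h' => act (mH h h') m)
                                 (g := fun h h' => act h (act h' m))).
- move=> h'; exact: islinear_comp (islinear_mulHl h') (islinear_actl m).
- move=> h; exact: islinear_comp (islinear_mulHr h) (islinear_actl m).
- move=> h'; exact: islinear_actl.
- move=> h; exact: islinear_comp (islinear_actl m) (islinear_actr h).
move=> i j; rewrite -!EHi_deltaf mulH_EH (islinearZ (islinear_actl m)) !act_EH.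
by rewrite iter_actX_actG (islinearZ (islinear_iter _ islinear_actG)) -!iterD mulnC addnC.
Qed.

Lemma actG_mul a b : aG (mA a b) = mA (aG a) (aG b).
Proof.
move: a b; apply: (islinear2_eq (f := fun a b => aG (mA a b)) (g := fun a b => mA (aG a) (aG b))).
- move=> b; exact: islinear_comp (islinear_mulAl b) islinear_actG.
- move=> a; exact: islinear_comp (islinear_mulAr a) islinear_actG.
- move=> b; exact: islinear_comp islinear_actG (islinear_mulAl _).
- move=> a; exact: islinear_comp islinear_actG (islinear_mulAr _).
move=> i j; rewrite -!EA_deltaf -!upow_small // mulA_upow !actG_upow.
by rewrite (islinearZ (islinear_mulAl _)) (islinearZ (islinear_mulAr _)) mulA_upow scA exprD.
Qed.

Lemma actX_mul a b : aX (mA a b) = mA (aX a) b + mA (aG a) (aX b).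
Proof.
move: a b; apply: (islinear2_eq (f := fun a b => aX (mA a b))
                                (g := fun a b => mA (aX a) b + mA (aG a) (aX b))).
- move=> b; exact: islinear_comp (islinear_mulAl b) islinear_actX.
- move=> a; exact: islinear_comp (islinear_mulAr a) islinear_actX.
- move=> b; apply: islinearDf; first exact: islinear_comp islinear_actX (islinear_mulAl _).
  exact: islinear_comp islinear_actG (islinear_mulAl _).
- move=> a; apply: islinearDf; first exact: islinear_mulAr.
  exact: islinear_comp islinear_actX (islinear_mulAr _).
move=> i j; rewrite -!EA_deltaf -!upow_small // mulA_upow !actX_upow actG_upow.
rewrite (islinearZ (islinear_mulAl (upow j))) (islinearZ (islinear_mulAl (sc _ _))).
rewrite (islinearZ (islinear_mulAr (upow i))) !mulA_upow.
rewrite scA qintD scDv; case: (nat_of_ord i) => [|i'] /=.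
  by rewrite qint0 !sc0v !add0r.
by case: (nat_of_ord j) => [|j'] /=; rewrite ?qint0 ?mulr0 ?sc0v ?addr0 ?addn0 // addSn addnS.
Qed.

(** * The Yetter-Drinfeld operators *)

Definition actHA (b : H k n) : HA -> HA :=
  linext (fun rc : IH n * 'I_n => tens (deltaf rc.1) (act b (deltaf rc.2))).

Lemma islinear_actHAr b : islinear (actHA b).
Proof. exact: islinear_linext. Qed.

Lemma actHA_tens b (z : H k n) (y : A k n) : actHA b (tens z y) = tens z (act b y).
Proof.
move: z y; apply: (islinear2_eq (f := fun z y => actHA b (tens z y))
                                (g := fun z y => tens z (act b y))).
- move=> y; exact: islinear_comp (islinear_tensl y) (islinear_actHAr b).
- move=> z; exact: islinear_comp (islinear_tensr z) (islinear_actHAr b).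
- move=> y; exact: islinear_tensl.
- move=> z; exact: islinear_comp (islinear_actr b) (islinear_tensr z).
by move=> i j; rewrite tens_deltaf [actHA b _]linext_deltaf.
Qed.

Lemma islinear_actHAl S : islinear (actHA^~ S).
Proof.
move=> c u v; rewrite /actHA /linext scv_sum -big_split; apply: eq_bigr => i _.
rewrite islinear_actl (islinearD (islinear_tensr _)) (islinearZ (islinear_tensr _)).
by rewrite scvD !scA mulrC.
Qed.

Lemma actHA_mulHAl b a S : actHA b (mHA (tens a oA) S) = mHA (tens a oA) (actHA b S).
Proof.
move: S; apply: islinear_tens_eq.
- exact: islinear_comp (islinear_mulHAr _) (islinear_actHAr b).
- exact: islinear_comp (islinear_actHAr b) (islinear_mulHAr _).
by move=> i j; rewrite mulHA_tens !actHA_tens mulHA_tens !mul1A.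
Qed.

Lemma actHA_mulHAr b z S : actHA b (mHA S (tens z oA)) = mHA (actHA b S) (tens z oA).
Proof.
move: S; apply: islinear_tens_eq.
- exact: islinear_comp (islinear_mulHAl _) (islinear_actHAr b).
- exact: islinear_comp (islinear_actHAr b) (islinear_mulHAl _).
by move=> i j; rewrite mulHA_tens !actHA_tens mulHA_tens !mulA1.
Qed.

Lemma actHA_mul b b' S : actHA (mH b b') S = actHA b (actHA b' S).
Proof.
move: S; apply: islinear_tens_eq.
- exact: islinear_actHAr.
- exact: islinear_comp (islinear_actHAr b') (islinear_actHAr b).
by move=> i j; rewrite !actHA_tens act_mul.
Qed.

Lemma actHA1 S : actHA oH S = S.
Proof.
move: S; apply: islinear_tens_eq; [exact: islinear_actHAr | exact: islinear_id |].
by move=> i j; rewrite actHA_tens act1.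
Qed.

Lemma actHA_g_mul S T : actHA g (mHA S T) = mHA (actHA g S) (actHA g T).
Proof.
move: S T; apply: islinear2_tens_eq.
- move=> T; exact: islinear_comp (islinear_mulHAl T) (islinear_actHAr _).
- move=> S; exact: islinear_comp (islinear_mulHAr S) (islinear_actHAr _).
- move=> T; exact: islinear_comp (islinear_actHAr _) (islinear_mulHAl _).
- move=> S; exact: islinear_comp (islinear_actHAr _) (islinear_mulHAr _).
by move=> i j i' j'; rewrite mulHA_tens !actHA_tens mulHA_tens !act_g actG_mul.
Qed.

Lemma actHA_x_mul S T :
  actHA x (mHA S T) = mHA (actHA x S) T + mHA (actHA g S) (actHA x T).
Proof.
move: S T; apply: islinear2_tens_eq.
- move=> T; exact: islinear_comp (islinear_mulHAl T) (islinear_actHAr _).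
- move=> S; exact: islinear_comp (islinear_mulHAr S) (islinear_actHAr _).
- move=> T; apply: islinearDf; first exact: islinear_comp (islinear_actHAr _) (islinear_mulHAl T).
  exact: islinear_comp (islinear_actHAr _) (islinear_mulHAl _).
- move=> S; apply: islinearDf; first exact: islinear_mulHAr.
  exact: islinear_comp (islinear_actHAr _) (islinear_mulHAr _).
move=> i j i' j'; rewrite mulHA_tens !actHA_tens !mulHA_tens act_g !act_x actX_mul.
by rewrite (islinearD (islinear_tensr _)).
Qed.

Definition ydl1 (a b : H k n) (S : HA) : HA := mHA (tens a oA) (actHA b S).

(** For [T = Delta h], [ydl T (rho m)] and [ydr T m] are the two sides of the
    Yetter-Drinfeld condition. *)
Definition ydl (T : HH) (S : HA) : HA :=
  \sum_(pq : IH n * IH n) sc (T pq) (ydl1 (EHi k pq.1) (EHi k pq.2) S).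

Definition ydr (T : HH) (m : A k n) : HA :=
  \sum_(pq : IH n * IH n) sc (T pq) (mHA (rho (act (EHi k pq.1) m)) (tens (EHi k pq.2) oA)).

Lemma islinear_rho : islinear rho.
Proof. exact: islinear_linext. Qed.

Lemma islinear_ydl1 a b : islinear (ydl1 a b).
Proof. exact: islinear_comp (islinear_actHAr b) (islinear_mulHAr _). Qed.

Lemma islinear_ydl1_a b S : islinear (fun a => ydl1 a b S).
Proof. exact: islinear_comp (islinear_tensl oA) (islinear_mulHAl _). Qed.

Lemma islinear_ydl1_b a S : islinear (fun b => ydl1 a b S).
Proof. exact: islinear_comp (islinear_actHAl S) (islinear_mulHAr _). Qed.

Lemma islinear_ydll S : islinear (ydl^~ S).
Proof. exact: islinear_linext. Qed.

Lemma islinear_ydlr T : islinear (ydl T).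
Proof. by apply: islinear_sumf => pq; exact: islinear_ydl1. Qed.

Lemma islinear_ydrl m : islinear (ydr^~ m).
Proof. exact: islinear_linext. Qed.

Lemma islinear_ydrr T : islinear (ydr T).
Proof.
apply: islinear_sumf => pq.
exact: islinear_comp (islinear_comp (islinear_actr _) islinear_rho) (islinear_mulHAl _).
Qed.

Lemma ydl_tens a b S : ydl (tens a b) S = ydl1 a b S.
Proof.
move: a b; apply: (islinear2_eq (f := fun a b => ydl (tens a b) S) (g := fun a b => ydl1 a b S)).
- move=> b; exact: islinear_comp (islinear_tensl b) (islinear_ydll S).
- move=> a; exact: islinear_comp (islinear_tensr a) (islinear_ydll S).
- move=> b; exact: islinear_ydl1_a.
- move=> a; exact: islinear_ydl1_b.
move=> p q; rewrite tens_deltaf /ydl.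
by rewrite (sum_sc_deltaf (fun pq : IH n * IH n => ydl1 (EHi k pq.1) (EHi k pq.2) S)) !EHi_deltaf.
Qed.

Lemma ydl1_mul a a' b b' S : ydl1 (mH a a') (mH b b') S = ydl1 a b (ydl1 a' b' S).
Proof. by rewrite /ydl1 actHA_mul actHA_mulHAl mulHA_assoc mulHA_tens mul1A. Qed.

Lemma ydl_mul T T' S : ydl (mHH T T') S = ydl T (ydl T' S).
Proof.
move: T T'; apply: (islinear2_eq (f := fun T T' => ydl (mHH T T') S)
                                  (g := fun T T' => ydl T (ydl T' S))).
- move=> T'; exact: islinear_comp (islinear_mulBl _ T') (islinear_ydll S).
- move=> T; exact: islinear_comp (islinear_mulBr _ T) (islinear_ydll S).
- move=> T'; exact: islinear_ydll.
- move=> T; exact: islinear_comp (islinear_ydll S) (islinear_ydlr T).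
by move=> [p q] [p' q']; rewrite -!tens_deltaf mulHH_tens !ydl_tens ydl1_mul.
Qed.

Lemma ydl_mulHAr T S z : ydl T (mHA S (tens z oA)) = mHA (ydl T S) (tens z oA).
Proof.
rewrite /ydl (islinear_sum (islinear_mulHAl _)); apply: eq_bigr => pq _.
by rewrite (islinearZ (islinear_mulHAl _)) /ydl1 actHA_mulHAr mulHA_assoc.
Qed.

Lemma ydr_tens a b m : ydr (tens a b) m = mHA (rho (act a m)) (tens b oA).
Proof.
move: a b; apply: (islinear2_eq (f := fun a b => ydr (tens a b) m)
                                (g := fun a b => mHA (rho (act a m)) (tens b oA))).
- move=> b; exact: islinear_comp (islinear_tensl b) (islinear_ydrl m).
- move=> a; exact: islinear_comp (islinear_tensr a) (islinear_ydrl m).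
- move=> b; exact: islinear_comp (islinear_comp (islinear_actl m) islinear_rho) (islinear_mulHAl _).
- move=> a; exact: islinear_comp (islinear_tensl oA) (islinear_mulHAr _).
move=> p q; rewrite tens_deltaf /ydr (sum_sc_deltaf (fun pq : IH n * IH n =>
  mHA (rho (act (EHi k pq.1) m)) (tens (EHi k pq.2) oA))).
by rewrite /= !EHi_deltaf.
Qed.

Lemma ydr_mul T T' m : ydr (mHH T T') m =
  \sum_(pq : IH n * IH n) sc (T' pq) (mHA (ydr T (act (EHi k pq.1) m)) (tens (EHi k pq.2) oA)).
Proof.
move: T T'; apply: (islinear2_eq (f := fun T T' => ydr (mHH T T') m)
  (g := fun T T' => \sum_(pq : IH n * IH n)
          sc (T' pq) (mHA (ydr T (act (EHi k pq.1) m)) (tens (EHi k pq.2) oA)))).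
- move=> T'; exact: islinear_comp (islinear_mulBl _ T') (islinear_ydrl m).
- move=> T; exact: islinear_comp (islinear_mulBr _ T) (islinear_ydrl m).
- move=> T'; apply: islinear_sumf => pq.
  exact: islinear_comp (islinear_ydrl _) (islinear_mulHAl _).
- move=> T; exact: islinear_linext.
move=> [p q] [p' q']; rewrite -!tens_deltaf mulHH_tens ydr_tens tens_deltaf.
rewrite (sum_sc_deltaf (fun pq : IH n * IH n =>
  mHA (ydr (tens (deltaf p) (deltaf q)) (act (EHi k pq.1) m)) (tens (EHi k pq.2) oA))) /=.
by rewrite ydr_tens !EHi_deltaf act_mul -mulHA_assoc mulHA_tens mul1A.
Qed.

(** * The coaction *)

Definition gexp (i : nat) : nat := ((n - 1) * i.+1)%N.

(** In the basis [g^a x^b], [a_i x^i g^-(i+1)] is [rho_coef i] times [g^(gexp i) x^i]. *)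
Definition rho_coef (i : nat) : k := coef_a w i * w ^+ (i * gexp i).

Lemma triangular_succ i : ((i.+1 * i.+2)./2 = (i * i.+1)./2 + i.+1)%N.
Proof.
have -> : (i.+1 * i.+2 = i * i.+1 + (i.+1).*2)%N by rewrite -mul2n; ring.
by rewrite halfD odd_double andbF add0n doubleK.
Qed.

Lemma rho_coef_rec i : rho_coef i * w ^+ gexp i + rho_coef i.+1 * qint i.+2 = w * rho_coef i.
Proof.
rewrite /rho_coef /coef_a.
have wg : w ^+ i.+1 * w ^+ gexp i = 1.
  rewrite -exprD /gexp -{1}(mul1n i.+1) -mulnDl subnKC //.
  by rewrite exprM w_n expr1n.
have E1 : w ^+ (i * gexp i) = (w ^+ gexp i) ^+ i by rewrite mulnC exprM.
have E2 : w ^+ (i.+1 * gexp i.+1) = (w ^+ gexp i) ^+ i.+2.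
  by rewrite -exprM /gexp; congr (w ^+ _); ring.
have E3 : w ^+ ((i.+1 * i.+2)./2) = w ^+ ((i * i.+1)./2) * w ^+ i.+1.
  by rewrite triangular_succ exprD.
have qS : (w - 1) * qint i.+2 = w ^+ i.+1 * w - 1 by rewrite /qint -subrX1 exprSr.
rewrite E1 E2 E3 exprSr.
move: wg qS; set a := w ^+ i.+1; set b := w ^+ gexp i; set q := qint i.+2.
set P := (w - 1) ^+ i; set T := w ^+ ((i * i.+1)./2) => wg qS.
have -> : P * T * b ^+ i * b + P * (w - 1) * (T * a) * b ^+ i.+2 * q =
          P * T * b ^+ i * (b + a * b * b * ((w - 1) * q)) by rewrite !exprS; ring.
rewrite qS.
have -> : b + a * b * b * (a * w - 1) = b * (1 - a * b) + (a * b) * (a * b) * w by ring.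
by rewrite wg subrr mulr0 add0r !mul1r; ring.
Qed.

Definition mono (a b s : nat) : HA := tens (EH a b) (upow s).

Local Notation g1 := (tens g oA).
Local Notation x1 := (tens x oA).
Local Notation rhou := (rhou n w).

Lemma powH_x i : powH w x i = EH 0 i.
Proof.
elim: i => [|i IHi] //; have -> : powH w x i.+1 = mH x (powH w x i) by [].
by rewrite IHi mulH_EH mul1n expr0 sc1v add0n add1n.
Qed.

Lemma powH_ginv j : powH w (ginvH k n) j = EH ((n - 1) * j) 0.
Proof.
elim: j => [|j IHj]; first by rewrite muln0.
have -> : powH w (ginvH k n) j.+1 = mH (ginvH k n) (powH w (ginvH k n) j) by [].
by rewrite IHj mulH_EH mul0n expr0 sc1v mulnS.
Qed.

Lemma powA_u j : powA w (uA k n) j = upow j.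
Proof.
elim: j => [|j IHj]; first by rewrite -oneA_upow.
have -> : powA w (uA k n) j.+1 = mA (uA k n) (powA w (uA k n) j) by [].
by rewrite IHj /uA -upow_small // mulA_upow.
Qed.

Lemma rhouE : rhou = \sum_(i < n) sc (rho_coef i) (mono (gexp i) i i.+1).
Proof.
apply: eq_bigr => i _; rewrite powH_x powH_ginv powA_u mulH_EH.
by rewrite (islinearZ (islinear_tensl _)) scA add0n addn0.
Qed.

Lemma g1_mono a b s : mHA g1 (mono a b s) = mono (1 + a) b s.
Proof. by rewrite /mono mulHA_tens mulH_EH mul0n expr0 sc1v add0n mul1A. Qed.

Lemma mono_g1 a b s : mHA (mono a b s) g1 = sc (w ^+ b) (mono (a + 1) b s).
Proof. by rewrite /mono mulHA_tens mulH_EH muln1 addn0 mulA1 (islinearZ (islinear_tensl _)). Qed.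

Lemma x1_mono a b s : mHA x1 (mono a b s) = sc (w ^+ a) (mono a (1 + b) s).
Proof. by rewrite /mono mulHA_tens mulH_EH mul1n add0n mul1A (islinearZ (islinear_tensl _)). Qed.

Lemma mono_x1 a b s : mHA (mono a b s) x1 = mono a (b + 1) s.
Proof. by rewrite /mono mulHA_tens mulH_EH muln0 expr0 sc1v addn0 mulA1. Qed.

Lemma actHA_g_mono a b s : actHA g (mono a b s) = sc (w ^+ s) (mono a b s).
Proof. by rewrite /mono actHA_tens act_g actG_upow (islinearZ (islinear_tensr _)). Qed.

Lemma actHA_x_mono a b s : actHA x (mono a b s) = sc (qint s) (mono a b s.-1).
Proof. by rewrite /mono actHA_tens act_x actX_upow (islinearZ (islinear_tensr _)). Qed.

Lemma rhou_g : mHA g1 (actHA g rhou) = sc w (mHA rhou g1).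
Proof.
rewrite rhouE (islinear_sum (islinear_actHAr _)) (islinear_sum (islinear_mulHAr _)).
rewrite (islinear_sum (islinear_mulHAl _)) scv_sum; apply: eq_bigr => i _.
rewrite (islinearZ (islinear_actHAr _)) (islinearZ (islinear_mulHAr _)).
rewrite (islinearZ (islinear_mulHAl _)) actHA_g_mono (islinearZ (islinear_mulHAr _)).
by rewrite g1_mono mono_g1 !scA addnC exprS; congr sc; ring.
Qed.

(** The terms of [(g (x) 1)(x . rho u)]; those of [(x (x) 1) rho u - w rho u (x (x) 1)]
    are their negated successors, so the sum telescopes. *)
Definition xrhou_term (i : nat) : HA := sc (rho_coef i * qint i.+1) (mono (1 + gexp i) i i).

Lemma xrhou_term_n : xrhou_term n = 0.
Proof. by rewrite /xrhou_term /mono EH_ge // (islinear0 (islinear_tensl _)) scv0. Qed.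

Lemma xrhou_term0 : xrhou_term 0 = oneHA k n.
Proof.
rewrite /xrhou_term /rho_coef /coef_a /= qintS qint0 mulr0 addr0 !expr0 !mulr1 sc1v.
have -> : (1 + gexp 0 = n)%N by rewrite /gexp; lia.
by rewrite /mono /oneHA -oneA_upow; congr tens; apply: EH_congr_mod; rewrite modnn mod0n.
Qed.

Lemma rhou_x : mHA x1 rhou + mHA g1 (actHA x rhou) = oneHA k n + sc w (mHA rhou x1).
Proof.
rewrite rhouE (islinear_sum (islinear_mulHAr _)) (islinear_sum (islinear_actHAr _)).
rewrite (islinear_sum (islinear_mulHAr _)) (islinear_sum (islinear_mulHAl _)) scv_sum.
have x1_term (i : 'I_n) : mHA x1 (sc (rho_coef i) (mono (gexp i) i i.+1)) =
    sc w (mHA (sc (rho_coef i) (mono (gexp i) i i.+1)) x1) - xrhou_term i.+1.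
  rewrite (islinearZ (islinear_mulHAr _)) (islinearZ (islinear_mulHAl _)).
  rewrite x1_mono mono_x1 /xrhou_term.
  have -> : mono (1 + gexp i.+1) i.+1 i.+1 = mono (gexp i) i.+1 i.+1.
    rewrite /mono; congr tens; apply: EH_congr_mod; rewrite /gexp.
    have -> : (1 + (n - 1) * i.+2 = (n - 1) * i.+1 + n)%N by rewrite mulnS; lia.
    by rewrite modnDr.
  by rewrite !scA addn1 add1n -scBv -(rho_coef_rec i) addrK.
have g1_term (i : 'I_n) :
    mHA g1 (actHA x (sc (rho_coef i) (mono (gexp i) i i.+1))) = xrhou_term i.
  rewrite (islinearZ (islinear_actHAr _)) (islinearZ (islinear_mulHAr _)) actHA_x_mono.
  by rewrite (islinearZ (islinear_mulHAr _)) g1_mono scA.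
under eq_bigr do rewrite x1_term.
under [X in _ + X = _]eq_bigr do rewrite g1_term.
have telescope : \sum_(i < n) (xrhou_term i - xrhou_term i.+1) = oneHA k n.
  rewrite -[LHS]opprK -sumrN.
  under eq_bigr do rewrite opprB.
  by rewrite -(big_mkord xpredT (fun i => xrhou_term i.+1 - xrhou_term i)) telescope_sumr //
    xrhou_term_n xrhou_term0 sub0r opprK.
by rewrite sumrB -addrA addrC -telescope sumrB; congr (_ + _); exact: addrC.
Qed.

Local Notation rhoup c := (powHA w rhou c).

Lemma rhoupS c : rhoup c.+1 = mHA rhou (rhoup c).
Proof. by []. Qed.

Lemma actHA_g_oneHA : actHA g (oneHA k n) = oneHA k n.
Proof. by rewrite /oneHA actHA_tens act_g actG_oneA. Qed.

Lemma actHA_x_oneHA : actHA x (oneHA k n) = 0.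
Proof. by rewrite /oneHA actHA_tens act_x actX_oneA (islinear0 (islinear_tensr _)). Qed.

Lemma rhou_pow_g c : mHA g1 (actHA g (rhoup c)) = sc (w ^+ c) (mHA (rhoup c) g1).
Proof.
elim: c => [|c IHc]; first by rewrite actHA_g_oneHA mulHA1 mul1HA sc1v.
rewrite rhoupS actHA_g_mul mulHA_assoc rhou_g (islinearZ (islinear_mulHAl _)) -mulHA_assoc IHc.
by rewrite (islinearZ (islinear_mulHAr _)) scA mulHA_assoc exprS.
Qed.

Lemma rhou_pow_x c : mHA x1 (rhoup c) + mHA g1 (actHA x (rhoup c)) =
  sc (qint c) (rhoup c.-1) + sc (w ^+ c) (mHA (rhoup c) x1).
Proof.
elim: c => [|c IHc].
  rewrite actHA_x_oneHA (islinear0 (islinear_mulHAr _)) addr0 qint0 sc0v add0r sc1v.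
  by rewrite mulHA1 mul1HA.
have g1_x : mHA g1 (actHA x (rhoup c)) =
    sc (qint c) (rhoup c.-1) + sc (w ^+ c) (mHA (rhoup c) x1) - mHA x1 (rhoup c).
  by rewrite -IHc (addrC (mHA x1 _)) addrK.
have rhou_pred : mHA rhou (sc (qint c) (rhoup c.-1)) = sc (qint c) (rhoup c).
  case: c {IHc g1_x} => [|c]; first by rewrite qint0 !sc0v (islinear0 (islinear_mulHAr _)).
  by rewrite (islinearZ (islinear_mulHAr _)).
rewrite rhoupS actHA_x_mul (islinearD (islinear_mulHAr _)) !mulHA_assoc rhou_g.
rewrite addrA -(islinearD (islinear_mulHAl _)) rhou_x.
rewrite (islinearD (islinear_mulHAl _)) mul1HA !(islinearZ (islinear_mulHAl _)) -!mulHA_assoc g1_x.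
rewrite (islinearB (islinear_mulHAr _)) (islinearD (islinear_mulHAr _)) rhou_pred.
rewrite !(islinearZ (islinear_mulHAr _)) !mulHA_assoc /= qintS scDv sc1v exprS -scA.
by rewrite scvB scvD !scA -addrA (addrC (sc w _)) subrK addrA.
Qed.

Definition yd_compatible (T : HH) := forall m, ydl T (rho m) = ydr T m.

Lemma rho_EA j : (j < n)%N -> rho (EA j) = rhoup j.
Proof.
move=> j_lt; rewrite (EA_deltaf (Ordinal j_lt)).
exact: (linext_deltaf (fun c : 'I_n => rhoup c)).
Qed.

Lemma yd_compatible_upow T :
  (forall c, (c < n)%N -> ydl T (rho (upow c)) = ydr T (upow c)) -> yd_compatible T.
Proof.
move=> Tc; apply: islinear_eq.
- exact: islinear_comp islinear_rho (islinear_ydlr T).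
- exact: islinear_ydrr.
by move=> c; rewrite -EA_deltaf -upow_small // Tc.
Qed.

Lemma yd_compatible_mul T T' : yd_compatible T -> yd_compatible T' -> yd_compatible (mHH T T').
Proof.
move=> compT compT' m; rewrite ydl_mul compT' ydr_mul [ydr T' m]/ydr.
rewrite (islinear_sum (islinear_ydlr T)); apply: eq_bigr => pq _.
by rewrite (islinearZ (islinear_ydlr T)) ydl_mulHAr compT.
Qed.

Lemma yd_compatible1 : yd_compatible (oneHH k n).
Proof. by move=> m; rewrite ydl_tens ydr_tens /ydl1 actHA1 act1 mul1HA mulHA1. Qed.

Lemma yd_compatible_pow T j : yd_compatible T -> yd_compatible (powHH w T j).
Proof.
move=> compT; elim: j => [|j IHj]; first exact: yd_compatible1.
exact: yd_compatible_mul.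
Qed.

Lemma yd_compatible_g : yd_compatible (tens g g).
Proof.
apply: yd_compatible_upow => c c_lt; rewrite ydl_tens ydr_tens /ydl1 act_g actG_upow.
rewrite (islinearZ islinear_rho) upow_small // rho_EA // rhou_pow_g.
by rewrite (islinearZ (islinear_mulHAl _)).
Qed.

Lemma yd_compatible_x : yd_compatible (tens x oH + tens g x).
Proof.
apply: yd_compatible_upow => c c_lt.
rewrite (islinearD (islinear_ydll _)) (islinearD (islinear_ydrl _)) !ydl_tens !ydr_tens /ydl1.
rewrite actHA1 act_x act_g upow_small // rho_EA // mulHA1 rhou_pow_x -upow_small //.
have cpred_lt : (c.-1 < n)%N := leq_ltn_trans (leq_pred c) c_lt.
rewrite actX_upow actG_upow.
rewrite (islinearZ islinear_rho _ (upow c.-1)) (islinearZ islinear_rho _ (upow c)).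
by rewrite !upow_small // !rho_EA // (islinearZ (islinear_mulHAl _)).
Qed.

Lemma yd_compatible_DeltaB i : yd_compatible (DeltaB w i).
Proof.
by apply: yd_compatible_mul; apply: yd_compatible_pow;
  [exact: yd_compatible_g | exact: yd_compatible_x].
Qed.

Lemma YD_lhsE (h : H k n) (m : A k n) : YD_lhs w h m = ydl (Delta w h) (rho m).
Proof.
apply: eq_bigr => pq _; rewrite /ydl1 /actHA /linext (islinear_sum (islinear_mulHAr _)) scv_sum.
apply: eq_bigr => rc _; rewrite (islinearZ (islinear_mulHAr _)) mulHA_tens mul1A scA.
by rewrite -(EHi_deltaf rc.1) -(EA_deltaf rc.2).
Qed.

Lemma YD_rhsE (h : H k n) (m : A k n) : YD_rhs w h m = ydr (Delta w h) m.
Proof.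
apply: eq_bigr => pq _; congr sc.
rewrite (islinear_decomp (islinear_mulHAl _)); apply: eq_bigr => -[r c] _ /=; congr sc.
by rewrite -tens_deltaf mulHA_tens mulA1 -(EHi_deltaf r) -(EA_deltaf c).
Qed.

Lemma YD_condition (h : H k n) (m : A k n) : YD_lhs w h m = YD_rhs w h m.
Proof.
rewrite YD_lhsE YD_rhsE /Delta (islinear_sum (islinear_ydll _)) (islinear_sum (islinear_ydrl _)).
apply: eq_bigr => i _; rewrite (islinearZ (islinear_ydll _)) (islinearZ (islinear_ydrl _)).
by rewrite yd_compatible_DeltaB.
Qed.

End Taft.

Theorem proposition5p3 (k : fieldType) (n : nat) (w : k) :
  [pchar k] =i pred0 ->
  (1 < n)%N ->
  n.-primitive_root w ->
  forall (h : H k n) (m : A k n), YD_lhs w h m = YD_rhs w h m.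
Proof.
move=> _ n_gt1 w_prim.
have w_n := prim_expr_order w_prim.
have w_neq1 : w != 1.
  by rewrite -{1}[w]expr1 -(expr0 w) (eq_prim_root_expr w_prim) mod0n modn_small.
have sum_w_n : \sum_(j < n) w ^+ j = 0.
  have := subrX1 w n; rewrite w_n subrr => /esym/eqP.
  by rewrite mulf_eq0 subr_eq0 (negbTE w_neq1) => /eqP.
exact: YD_condition.
Qed.
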